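(* In the 1-sided False Negative regime, the following Naive algorithm finds a realized spanning tree while performing $O(m\log n)$ queries in expectation: proceed in rounds, in each round querying every one of the $m$ edges of the moldgraph once, and stop as soon as the edges that have received a ``Yes'' answer contain a spanning tree (which is then output).
   Context: Problem (graph connectivity with noisy queries): a graph $G=(V,E)$, the moldgraph, with $n$ vertices and $m$ edges is given. An adversary selects an arbitrary connected spanning subgraph of $G$ to be realized. The algorithm may query an oracle on any edge $e$ (``Is $e$ realized?''), receiving ``Yes''/``No''; each query costs $1$; answers to distinct queries (including repeated queries of the same edge) are independent. Goal: output a spanning tree of $G$ all of whose edges are realized. In the 1-sided False Negative regime: for a non-realized edge the answer is always ``No''; for a realized edge the answer is ``No'' with a constant probability $p<1/2$ and ``Yes'' with probability $1-p$. *)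

From HB Require Import structures.
From mathcomp Require Import all_boot all_order all_algebra.
From mathcomp Require Import all_classical all_reals all_analysis.
Set Implicit Arguments. Unset Strict Implicit. Unset Printing Implicit Defensive.
Import Order.TTheory GRing.Theory Num.Theory.
Local Open Scope ring_scope.

Section Naive.
Variable V : finType.

Definition simple_graph (E : {set {set V}}) : bool :=
  [forall e in E, #|e| == 2]%N.

Definition adj (F : {set {set V}}) : rel V := fun x y => [set x; y] \in F.

Definition gconnected (F : {set {set V}}) : bool :=
  [forall x, forall y, connect (adj F) x y].

Definition spanning_tree (E T : {set {set V}}) : bool :=
  [&& T \subset E, gconnected T & [forall e in T, ~~ gconnected (T :\ e)]].

(* Outcomes of k rounds: omega i e is the answer (true = Yes) to the query on
   edge e in round i.  (Non-edges are formally included and always answer No;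
   they never influence anything.) *)
Definition outcome (k : nat) := {ffun 'I_k -> {ffun {set V} -> bool}}.

Variable R : realType.

Definition ans_prob (p : R) (Rz : {set {set V}}) (e : {set V}) (b : bool) : R :=
  if e \in Rz then (if b then 1 - p else p) else (if b then 0 else 1).

Definition outcome_prob (p : R) (Rz : {set {set V}}) k (om : outcome k) : R :=
  \prod_(i < k) \prod_(e : {set V}) ans_prob p Rz e (om i e).

Definition yes_edges (E : {set {set V}}) k (om : outcome k) (j : nat) :=
  [set e in E | [exists i : 'I_k, (i < j)%N && om i e]].

Definition stopped (E : {set {set V}}) k (om : outcome k) (j : nat) : bool :=
  [exists T : {set {set V}}, spanning_tree E T && (T \subset yes_edges E om j)].

Definition prob_stop_at (p : R) (E Rz : {set {set V}}) (k : nat) : R :=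
  \sum_(om : outcome k)
     outcome_prob p Rz om *
     (stopped E om k && [forall j : 'I_k, ~~ stopped E om j])%:R.

Definition expected_queries (p : R) (E Rz : {set {set V}}) : \bar R :=
  (\sum_(k <oo) (((#|E| * k)%:R * prob_stop_at p E Rz k)%:E))%E.

End Naive.

From HB Require Import structures.
From mathcomp Require Import all_boot all_order all_algebra.
From mathcomp Require Import all_classical all_reals all_analysis.
From mathcomp Require Import lra ring zify.
Import Order.TTheory GRing.Theory Num.Theory.
Local Open Scope ring_scope.
Set Implicit Arguments. Unset Strict Implicit. Unset Printing Implicit Defensive.

(* Let tau be the number of rounds performed.  The realized graph is connected,
   so it contains a spanning tree of E, and the algorithm has stopped after k
   rounds as soon as every realized edge has received a Yes.  A realized edge is
   answered No in k consecutive rounds with probability p^k, so by the union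
   bound P(tau > k) <= m p^k <= n^2 2^-k.  Hence E[tau] = sum_k P(tau > k) is at
   most 2 log2 n + O(1), and the m E[tau] queries are O(m log n).  Correctness
   holds because a non-realized edge is never answered Yes. *)

Lemma bigA_distr_bigA2 (R : comPzSemiRingType) (I J K : finType)
    (G : I -> J -> K -> R) :
  \sum_(f : {ffun I -> {ffun J -> K}}) \prod_i \prod_j G i j (f i j) =
  \prod_i \prod_j \sum_k G i j k.
Proof. by under [RHS]eq_bigr do rewrite bigA_distr_bigA; rewrite bigA_distr_bigA. Qed.

Lemma prodr_indicator (R : comPzSemiRingType) (I : finType) (P : pred I) :
  \prod_i ((P i)%:R : R) = ([forall i, P i])%:R.
Proof.
have [/forallP allP | /forallPn [i notPi]] := boolP [forall i, P i].
  by rewrite big1 // => i _; rewrite allP.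
by rewrite (bigD1 i) //= (negbTE notPi) mul0r.
Qed.

Section Rounds.
Variable V : finType.

Definition trunc_outcome k (om : outcome V k.+1) : outcome V k :=
  [ffun i => om (widen_ord (leqnSn k) i)].

Definition snoc_outcome k (om : outcome V k) (w : {ffun {set V} -> bool}) :
    outcome V k.+1 :=
  [ffun i => if unlift ord_max i is Some j then om j else w].

Lemma snoc_outcome_widen k (om : outcome V k) w i :
  snoc_outcome om w (widen_ord (leqnSn k) i) = om i.
Proof.
have -> : widen_ord (leqnSn k) i = lift ord_max i.
  by apply: val_inj; rewrite [RHS]lift_max.
by rewrite ffunE liftK.
Qed.

Lemma snoc_outcome_last k (om : outcome V k) w : snoc_outcome om w ord_max = w.
Proof. by rewrite ffunE unlift_none. Qed.

Lemma snoc_outcomeK k w : cancel (@snoc_outcome k ^~ w) (@trunc_outcome k).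
Proof. by move=> om; apply/ffunP => i; rewrite ffunE snoc_outcome_widen. Qed.

Lemma trunc_outcomeK k (om : outcome V k.+1) :
  snoc_outcome (trunc_outcome om) (om ord_max) = om.
Proof.
apply/ffunP => i; rewrite ffunE.
case: unliftP => [j ->|-> //]; rewrite ffunE; congr (om _).
by apply: val_inj; rewrite [RHS]lift_max.
Qed.

Variable E : {set {set V}}.

Lemma yes_edges_trunc k (om : outcome V k.+1) j : (j <= k)%N ->
  yes_edges E om j = yes_edges E (trunc_outcome om) j.
Proof.
move=> le_jk; apply/setP => e; rewrite !inE; congr andb.
apply/existsP/existsP => [[i /andP [lt_ij yes_i]] | [i /andP [lt_ij yes_i]]].
  have lt_ik : (i < k)%N by apply: leq_trans le_jk.
  exists (Ordinal lt_ik); rewrite lt_ij ffunE.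
  by rewrite (_ : widen_ord _ _ = i) //; apply: val_inj.
by exists (widen_ord (leqnSn k) i); rewrite lt_ij; rewrite ffunE in yes_i.
Qed.

Lemma stopped_trunc k (om : outcome V k.+1) j : (j <= k)%N ->
  stopped E om j = stopped E (trunc_outcome om) j.
Proof. by move=> le_jk; rewrite /stopped yes_edges_trunc. Qed.

Lemma stopped_mono k (om : outcome V k) j j' : (j <= j')%N ->
  stopped E om j -> stopped E om j'.
Proof.
move=> le_jj' /existsP [T /andP [treeT T_yes]]; apply/existsP; exists T.
rewrite treeT; apply: (fintype.subset_trans T_yes); apply/fintype.subsetP => e.
rewrite !inE => /andP [-> /existsP [i /andP [lt_ij yes_i]]].
by apply/existsP; exists i; rewrite yes_i (leq_trans lt_ij le_jj').
Qed.

Lemma first_stop_succE (R : pzRingType) k (om : outcome V k.+1) :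
  ((stopped E om k.+1 && [forall j : 'I_k.+1, ~~ stopped E om j])%:R : R) =
  (~~ stopped E om k)%:R - (~~ stopped E om k.+1)%:R.
Proof.
have -> : [forall j : 'I_k.+1, ~~ stopped E om j] = ~~ stopped E om k.
  apply/forallP/idP => [notstop | notstop j]; first exact: (notstop ord_max).
  by apply: contra notstop; apply: stopped_mono; rewrite -ltnS.
have [stop_k|_] := boolP (stopped E om k).
  by rewrite (stopped_mono (leqnSn k) stop_k) subrr.
by case: (stopped E om k.+1); rewrite ?subrr ?subr0.
Qed.

End Rounds.

Section SpanningTree.
Variables (V : finType) (E : {set {set V}}).

Lemma exists_spanning_tree_sub (F : {set {set V}}) :
  F \subset E -> gconnected F -> exists2 T, spanning_tree E T & T \subset F.
Proof.
move=> FE connF; have [T /minsetP [connT minT] TF] := minset_exists connF.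
exists T => //; rewrite /spanning_tree (fintype.subset_trans TF FE) connT /=.
apply/forallP => e; apply/implyP => eT; apply/negP => connTe.
by have /setP/(_ e) := minT _ connTe (subD1set T e); rewrite !inE eqxx eT.
Qed.

Lemma not_stopped_never_yes (Rz : {set {set V}}) k (om : outcome V k) :
  Rz \subset E -> gconnected Rz -> ~~ stopped E om k ->
  exists2 e, e \in Rz & [forall i, ~~ om i e].
Proof.
move=> RzE connRz; apply: contraNP => all_yes.
have [T treeT TRz] := exists_spanning_tree_sub RzE connRz.
apply/existsP; exists T; rewrite treeT; apply: (fintype.subset_trans TRz).
apply/fintype.subsetP => e e_real; rewrite inE (fintype.subsetP RzE) //=.
have /forallPn [i /negPn yes_i] : ~~ [forall i, ~~ om i e].
  by apply/negP => never; apply: all_yes; exists e.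
by apply/existsP; exists i; rewrite ltn_ord.
Qed.

End SpanningTree.

Section NaiveAlgorithm.
Variables (V : finType) (R : realType) (p : R) (Rz : {set {set V}}).
Hypotheses (p_ge0 : 0 <= p) (p_le1 : p <= 1).

Lemma ans_prob_ge0 e b : 0 <= ans_prob p Rz e b.
Proof. by rewrite /ans_prob; case: ifP => _; case: b => /=; move: p_ge0 p_le1; lra. Qed.

Lemma sum_ans_prob e : \sum_b ans_prob p Rz e b = 1.
Proof. by rewrite big_bool /ans_prob; case: ifP => _ /=; lra. Qed.

Lemma outcome_prob_ge0 k (om : outcome V k) : 0 <= outcome_prob p Rz om.
Proof. by do 2![apply: prodr_ge0 => ? _]; apply: ans_prob_ge0. Qed.

Lemma sum_outcome_prob k : \sum_(om : outcome V k) outcome_prob p Rz om = 1.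
Proof.
rewrite (bigA_distr_bigA2 (fun _ => ans_prob p Rz)).
by do 2![apply: big1 => ? _]; apply: sum_ans_prob.
Qed.

Lemma outcome_prob_snoc k (om : outcome V k) w :
  outcome_prob p Rz (snoc_outcome om w) =
  outcome_prob p Rz om * \prod_e ans_prob p Rz e (w e).
Proof.
rewrite /outcome_prob big_ord_recr /= snoc_outcome_last.
by under eq_bigr do rewrite snoc_outcome_widen.
Qed.

Lemma sum_outcome_prob_trunc k (g : outcome V k -> R) :
  \sum_(om : outcome V k.+1) outcome_prob p Rz om * g (trunc_outcome om) =
  \sum_(om : outcome V k) outcome_prob p Rz om * g om.
Proof.
rewrite (reindex (fun x => snoc_outcome x.1 x.2)) /=; last first.
  exists (fun om => (trunc_outcome om, om ord_max)) => [[om w] _ | om _] /=.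
    by rewrite snoc_outcomeK snoc_outcome_last.
  by rewrite trunc_outcomeK.
rewrite -(pair_bigA _ (fun om w => outcome_prob p Rz (snoc_outcome om w) *
                                   g (trunc_outcome (snoc_outcome om w)))) /=.
apply: eq_bigr => om _.
under eq_bigr do rewrite snoc_outcomeK outcome_prob_snoc mulrAC.
rewrite -mulr_sumr -bigA_distr_bigA /=.
by rewrite big1 ?mulr1 // => e _; apply: sum_ans_prob.
Qed.

Lemma prob_never_yes k e : e \in Rz ->
  \sum_(om : outcome V k) outcome_prob p Rz om * ([forall i, ~~ om i e])%:R =
  p ^+ k.
Proof.
move=> e_real.
pose G (_ : 'I_k) e' b := ans_prob p Rz e' b * (if e' == e then (~~ b)%:R else 1).
transitivity (\sum_(om : outcome V k) \prod_i \prod_e' G i e' (om i e')).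
  apply: eq_bigr => om _; rewrite /outcome_prob -prodr_indicator -big_split.
  by apply: eq_bigr => i _; rewrite big_split /= -big_mkcond big_pred1_eq.
rewrite bigA_distr_bigA2 -[in RHS](card_ord k) -prodr_const.
apply: eq_bigr => i _.
rewrite (bigD1 e) //= [X in _ * X]big1 => [|e' ne_e'e].
  by rewrite mulr1 big_bool /G eqxx /ans_prob e_real /=; lra.
rewrite -[RHS](sum_ans_prob e'); apply: eq_bigr => b _.
by rewrite /G (negbTE ne_e'e) mulr1.
Qed.

Lemma yes_realized k (om : outcome V k) i e :
  0 < outcome_prob p Rz om -> om i e -> e \in Rz.
Proof.
move=> prob_gt0 yes; apply/negPn/negP => e_unreal; move: prob_gt0.
rewrite /outcome_prob (bigD1 i) //= (bigD1 e) //= /ans_prob (negbTE e_unreal) yes.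
by rewrite !mul0r ltxx.
Qed.

Variable E : {set {set V}}.

Definition prob_not_stopped k :=
  \sum_(om : outcome V k) outcome_prob p Rz om * (~~ stopped E om k)%:R.

Lemma prob_not_stopped_ge0 k : 0 <= prob_not_stopped k.
Proof. by apply: sumr_ge0 => om _; rewrite mulr_ge0 ?outcome_prob_ge0. Qed.

Lemma prob_not_stopped_le1 k : prob_not_stopped k <= 1.
Proof.
rewrite -(sum_outcome_prob k); apply: ler_sum => om _.
by rewrite ler_piMr ?outcome_prob_ge0 // lern1 leq_b1.
Qed.

Lemma prob_stop_at_ge0 k : 0 <= prob_stop_at p E Rz k.
Proof. by apply: sumr_ge0 => om _; rewrite mulr_ge0 ?outcome_prob_ge0. Qed.

Lemma prob_stop_at_succ k :
  prob_stop_at p E Rz k.+1 = prob_not_stopped k - prob_not_stopped k.+1.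
Proof.
rewrite /prob_stop_at; under eq_bigr do rewrite first_stop_succE mulrBr.
rewrite sumrB /prob_not_stopped.
rewrite -(sum_outcome_prob_trunc (fun om => (~~ stopped E om k)%:R)).
by congr (_ - _); apply: eq_bigr => om _; rewrite -stopped_trunc.
Qed.

Lemma prob_not_stopped_le k : Rz \subset E -> gconnected Rz ->
  prob_not_stopped k <= #|Rz|%:R * p ^+ k.
Proof.
move=> RzE connRz; apply: (@le_trans _ _ (\sum_(e in Rz) \sum_(om : outcome V k)
    outcome_prob p Rz om * ([forall i, ~~ om i e])%:R)); last first.
  rewrite (eq_bigr (fun=> p ^+ k)) ?sumr_const ?mulr_natl // => e.
  exact: prob_never_yes.
rewrite exchange_big /=; apply: ler_sum => om _; rewrite -mulr_sumr.
apply: ler_wpM2l; first exact: outcome_prob_ge0.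
have [_|/(not_stopped_never_yes RzE connRz) [e e_real never]] := boolP (stopped E om k).
  by apply: sumr_ge0 => *; rewrite ler0n.
by rewrite (bigD1 e) //= never lerDl; apply: sumr_ge0 => *; rewrite ler0n.
Qed.

Lemma sum_mean_stop_le N :
  \sum_(k < N) k%:R * prob_stop_at p E Rz k <= \sum_(k < N) prob_not_stopped k.
Proof.
have telescope n : \sum_(k < n.+1) k%:R * prob_stop_at p E Rz k =
    \sum_(k < n) prob_not_stopped k - n%:R * prob_not_stopped n.
  elim: n => [|n IH]; first by rewrite big_ord1 big_ord0 !mul0r subr0.
  by rewrite big_ord_recr /= IH prob_stop_at_succ big_ord_recr /= -natr1; ring.
case: N => [|N]; first by rewrite !big_ord0.
rewrite telescope big_ord_recr /= lerBlDr -addrA lerDl.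
by rewrite addr_ge0 ?mulr_ge0 ?prob_not_stopped_ge0.
Qed.

Lemma expected_queries_le (B : R) :
  (forall N, \sum_(k < N) k%:R * prob_stop_at p E Rz k <= B) ->
  (expected_queries p E Rz <= (#|E|%:R * B)%:E)%E.
Proof.
move=> partial_le; apply: (lime_le (is_cvg_nneseries _)) => [k _ _|].
  by rewrite lee_fin mulr_ge0 ?prob_stop_at_ge0.
apply: nearW => N; rewrite sumEFin lee_fin big_mkord.
under eq_bigr do rewrite natrM -mulrA.
by rewrite -mulr_sumr ler_wpM2l.
Qed.

End NaiveAlgorithm.

Lemma sum_capped_geometric_le (R : realFieldType) (f : nat -> R) (m : R) K N :
  (forall j, f j <= 1) -> (forall j, f j <= m * 2^-1 ^+ j) -> m <= 2 ^+ K ->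
  \sum_(j < N) f j <= K%:R + 2.
Proof.
move=> f_le1 f_le_geo m_le.
have f_tail j : (K <= j)%N -> f j <= 2^-1 ^+ (j - K).
  move=> le_Kj; apply: le_trans (f_le_geo j) _.
  rewrite -{1}(subnKC le_Kj) exprD mulrA ler_piMl ?exprn_ge0 ?invr_ge0 //.
  by rewrite exprVn ler_pdivrMr ?exprn_gt0 // mul1r.
(* 2 - 2 * 2^-(N - K) is the sum of the 2^-(j - K) over K <= j < N. *)
suff : \sum_(j < N) f j <= (minn N K)%:R + 2 - 2 * 2^-1 ^+ (N - K).
  have : (minn N K)%:R <= K%:R :> R by rewrite ler_nat geq_minr.
  have : 0 <= 2^-1 ^+ (N - K) :> R by rewrite exprn_ge0 // invr_ge0.
  lra.
elim: N => [|N IH]; first by rewrite big_ord0 min0n sub0n expr0; lra.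
rewrite big_ord_recr /=; move: IH.
have [lt_NK|le_KN] := ltnP N K.
  have [-> [-> ->]] : (minn N.+1 K = N.+1 /\ N - K = 0 /\ N.+1 - K = 0)%N by lia.
  by move: (f_le1 N); rewrite -natr1 expr0; lra.
have -> : minn N.+1 K = K by lia.
by rewrite subSn // exprS; move: (f_tail N le_KN); lra.
Qed.

Lemma card_simple_graph_le (V : finType) (E : {set {set V}}) :
  simple_graph E -> (#|E| <= #|V| * #|V|)%N.
Proof.
move=> simpleE.
have E_pairs : E \subset [set [set x.1; x.2] | x : V * V].
  apply/fintype.subsetP => e eE.
  have /cards2P [x [y [_ ->]]] := forall_inP simpleE e eE.
  by apply/imsetP; exists (x, y).
by rewrite -card_prod (leq_trans (subset_leq_card E_pairs)) ?leq_imset_card.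
Qed.

Lemma trunc_log2_ln_le (R : realType) n : (0 < n)%N ->
  (trunc_log 2 n)%:R * ln (2 : R) <= ln n%:R.
Proof.
move=> n_gt0; rewrite mulr_natl -lnXn // ler_ln ?posrE ?exprn_gt0 ?ltr0n //.
by rewrite -natrX ler_nat trunc_logP.
Qed.

Theorem lemma4 (R : realType) (p : R) :
  0 <= p -> p < 1 / 2 ->
  exists C : R, 0 < C /\
    forall (V : finType) (E Rz : {set {set V}}),
      simple_graph E -> (2 <= #|V|)%N ->
      Rz \subset E -> gconnected Rz ->
      (* correctness: whenever the algorithm stops (on an outcome of positive
         probability), every spanning tree among the Yes-edges is realized *)
      (forall (k : nat) (om : outcome V k), 0 < outcome_prob p Rz om ->
         forall T : {set {set V}}, spanning_tree E T ->
           T \subset yes_edges E om k -> T \subset Rz) /\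
      (* cost: O(m log n) queries in expectation *)
      (expected_queries p E Rz <= (C * #|E|%:R * ln (#|V|%:R))%:E)%E.
Proof.
move=> p_ge0 p_lt_half; have p_le1 : p <= 1 by lra.
have ln2_gt0 : 0 < ln (2 : R) by rewrite ln_gt0 // ltr1n.
exists (6 / ln 2); split; first by rewrite divr_gt0.
move=> V E Rz simpleE n_ge2 RzE connRz; split.
  move=> k om prob_gt0 T _ T_yes; apply/fintype.subsetP => e /(fintype.subsetP T_yes).
  by rewrite inE => /andP [_ /existsP [i /andP [_ /(yes_realized prob_gt0)]]].
set n := #|V|; set t := trunc_log 2 n.
have m_le : (#|E| <= 2 ^ (t.+1 + t.+1))%N.
  rewrite expnD (leq_trans (card_simple_graph_le simpleE)) //.
  by rewrite leq_mul // ltnW // trunc_log_ltn.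
apply: le_trans (expected_queries_le p_ge0 p_le1 (B := (t.+1 + t.+1)%:R + 2) _) _.
  move=> N; apply: le_trans (sum_mean_stop_le Rz p_ge0 p_le1 E N) _.
  apply: (sum_capped_geometric_le (m := #|E|%:R)) => [j|j|].
  - exact: prob_not_stopped_le1.
  - apply: le_trans (prob_not_stopped_le p_ge0 p_le1 j RzE connRz) _.
    rewrite ler_pM ?exprn_ge0 ?ler_nat ?subset_leq_card //.
    by rewrite lerXn2r ?nnegrE ?invr_ge0 //; lra.
  - by rewrite -natrX ler_nat.
rewrite lee_fin mulrC mulrAC ler_wpM2r // mulrAC ler_pdivlMr //.
have n_gt0 : (0 < n)%N by lia.
have := trunc_log2_ln_le R n_gt0; have : ln 2 <= ln (n%:R : R).
  by rewrite ler_ln ?posrE ?ltr0n // (ler_nat R 2).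
rewrite natrD -natr1; nra.
Qed.
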